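(* For all $\boldsymbol{\omega}\in\mathbb{R}^N$, $$\left|\prod_{m=1}^M\frac{1}{1-z_m(\boldsymbol{\omega})}-\prod_{m=1}^M e^{z_m(\boldsymbol{\omega})}\right|\le\sum_{m=1}^M\min\Big\{2,\ \big|1-z_m(\boldsymbol{\omega})-e^{-z_m(\boldsymbol{\omega})}\big|\Big\}.$$
   Context: Let $\sigma_v^2>0$, $\beta(M)>0$, $\mathbf{h}\in\mathbb{C}^N$, and $\lambda_1,\dots,\lambda_M\ge0$ the eigenvalues of a Hermitian positive semidefinite $\boldsymbol{\Sigma}_{\mathbf{s}}\in\mathbb{C}^{M\times M}$. For $\boldsymbol{\omega}\in\mathbb{R}^N$ and $m\in[1:M]$ define $z_m(\boldsymbol{\omega})=j\frac{\lambda_m}{\beta(M)}\sum_{n=1}^N\frac{|h_n|^2\omega_n}{1-j\frac{\sigma_v^2\omega_n}{\beta(M)}}$, $j=\sqrt{-1}$. *)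

From Stdlib Require Import Reals.
From Coquelicot Require Import Coquelicot.
Open Scope R_scope.

Definition Cexp (z : Complex.C) : Complex.C :=
  (exp (Re z) * cos (Im z), exp (Re z) * sin (Im z)).

Fixpoint Csum (n : nat) (f : nat -> Complex.C) : Complex.C :=
  match n with O => RtoC 0 | S k => Cplus (Csum k f) (f k) end.
Fixpoint Cprod (n : nat) (f : nat -> Complex.C) : Complex.C :=
  match n with O => RtoC 1 | S k => Cmult (Cprod k f) (f k) end.
Fixpoint Rsum (n : nat) (f : nat -> R) : R :=
  match n with O => 0 | S k => Rsum k f + f k end.

(* z_m(omega), with indices n in 0..N-1;  lam is the m-th eigenvalue. *)
Definition zm (N : nat) (sigma2 beta lam : R) (h : nat -> Complex.C)
  (omega : nat -> R) : Complex.C :=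
  Cmult (Cmult Ci (RtoC (lam / beta)))
    (Csum N (fun n =>
       Cdiv (RtoC ((Cmod (h n))^2 * omega n))
            (Cminus (RtoC 1) (Cmult Ci (RtoC (sigma2 * omega n / beta)))))).

(* Every z_m has nonpositive real part: z_m is i times a nonnegative multiple of a sum of
   terms r / (1 - i t) with r t >= 0, whose imaginary parts r t / (1 + t^2) are nonnegative.
   On the half-plane Re z <= 0 both factors 1/(1 - z) and e^z lie in the closed unit disk,
   so the difference of the products telescopes into the sum of the differences of the
   factors.  Finally 1/(1 - z) - e^z = (1/(1 - z)) e^z (e^(-z) - (1 - z)), whose modulus is
   at most |1 - z - e^(-z)|, and at most 2 by the triangle inequality. *)
From Stdlib Require Import Reals Lra Lia.
From Coquelicot Require Import Coquelicot.
Open Scope R_scope.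

Lemma Im_Csum (N : nat) (f : nat -> C) : Im (Csum N f) = Rsum N (fun n => Im (f n)).
Proof. induction N as [|N IH]; simpl; [reflexivity|]. now rewrite <- IH. Qed.

Lemma Rsum_ge0 (N : nat) (f : nat -> R) : (forall n, 0 <= f n) -> 0 <= Rsum N f.
Proof. intros Hf; induction N as [|N IH]; simpl; [lra|]. specialize (Hf N); lra. Qed.

Lemma Rsum_le (N : nat) (f g : nat -> R) :
  (forall n, (n < N)%nat -> f n <= g n) -> Rsum N f <= Rsum N g.
Proof.
  intros Hfg; induction N as [|N IH]; simpl; [lra|].
  apply Rplus_le_compat; [apply IH; intros n Hn|]; apply Hfg; lia.
Qed.

Lemma Im_div_1_sub_iR (r t : R) :
  Im (Cdiv (RtoC r) (Cminus (RtoC 1) (Cmult Ci (RtoC t)))) = r * t / (1 + t ^ 2).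
Proof.
  unfold Cdiv, Cminus, Cmult, Cinv, Copp, Cplus, RtoC, Ci; simpl.
  assert (0 < 1 + t * t) by nra.
  field; lra.
Qed.

Lemma Re_iR_mult (c : R) (w : C) : Re (Cmult (Cmult Ci (RtoC c)) w) = - (c * Im w).
Proof. destruct w as [x y]; unfold Cmult, Ci, RtoC; simpl; ring. Qed.

Lemma Re_zm_le0 (N : nat) (sigma2 beta lam : R) (h : nat -> C) (omega : nat -> R) :
  0 < sigma2 -> 0 < beta -> 0 <= lam -> Re (zm N sigma2 beta lam h omega) <= 0.
Proof.
  intros Hsigma Hbeta Hlam; unfold zm; rewrite Re_iR_mult, Im_Csum.
  assert (Hterm : forall n, 0 <= Im (Cdiv (RtoC (Cmod (h n) ^ 2 * omega n))
                     (Cminus (RtoC 1) (Cmult Ci (RtoC (sigma2 * omega n / beta)))))).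
  { intros n; rewrite Im_div_1_sub_iR.
    replace (Cmod (h n) ^ 2 * omega n * (sigma2 * omega n / beta))
      with ((Cmod (h n) * omega n) ^ 2 * (sigma2 / beta)) by (field; lra).
    apply Rmult_le_pos; [apply Rmult_le_pos|].
    - apply pow2_ge_0.
    - apply Rlt_le, Rdiv_lt_0_compat; lra.
    - apply Rlt_le, Rinv_0_lt_compat; pose proof (pow2_ge_0 (sigma2 * omega n / beta)); lra. }
  assert (0 <= lam / beta) by (apply Rdiv_le_0_compat; lra).
  pose proof (Rsum_ge0 N _ Hterm); nra.
Qed.

Lemma Cmod_Cexp (z : C) : Cmod (Cexp z) = exp (Re z).
Proof.
  destruct z as [x y]; unfold Cexp, Cmod; simpl.
  pose proof (sin2_cos2 y) as Hy; unfold Rsqr in Hy.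
  replace (exp x * cos y * (exp x * cos y * 1) + exp x * sin y * (exp x * sin y * 1))
    with (exp x * exp x) by nra.
  apply sqrt_square, Rlt_le, exp_pos.
Qed.

Lemma Cexp_mul_opp (z : C) : Cmult (Cexp z) (Cexp (Copp z)) = RtoC 1.
Proof.
  destruct z as [x y]; unfold Cexp, Cmult, Copp, RtoC; simpl.
  rewrite cos_neg, sin_neg, exp_Ropp.
  assert (exp x <> 0) by apply Rgt_not_eq, exp_pos.
  pose proof (sin2_cos2 y) as Hy; unfold Rsqr in Hy.
  f_equal; field_simplify; auto; nra.
Qed.

Lemma Cmod_Cexp_le1 (z : C) : Re z <= 0 -> Cmod (Cexp z) <= 1.
Proof.
  intros Hz; rewrite Cmod_Cexp, <- exp_0.
  destruct Hz as [Hz | ->]; [apply Rlt_le, exp_increasing, Hz | apply Rle_refl].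
Qed.

Lemma Cmod_1_sub_ge1 (z : C) : Re z <= 0 -> 1 <= Cmod (Cminus (RtoC 1) z).
Proof.
  intros Hz; eapply Rle_trans; [|apply re_le_Cmod].
  destruct z as [x y]; simpl in *; rewrite Rabs_right; lra.
Qed.

Lemma Cmod_inv_le1 (u : C) : 1 <= Cmod u -> Cmod (Cinv u) <= 1.
Proof.
  intros Hu; rewrite Cmod_inv.
  - rewrite <- Rinv_1; apply Rinv_le_contravar; lra.
  - intros ->; rewrite Cmod_0 in Hu; lra.
Qed.

(* The point of the factorisation: both prefactors have modulus at most 1. *)
Lemma Cinv_sub_Cexp (u z : C) : u <> RtoC 0 ->
  Cminus (Cinv u) (Cexp z) = Cmult (Cmult (Cinv u) (Cexp z)) (Cminus (Cexp (Copp z)) u).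
Proof.
  intros Hu.
  transitivity (Cminus (Cmult (Cinv u) (Cmult (Cexp z) (Cexp (Copp z))))
                       (Cmult (Cmult (Cinv u) u) (Cexp z))).
  - rewrite Cexp_mul_opp, Cinv_l by exact Hu; unfold Cminus; ring.
  - unfold Cminus; ring.
Qed.

Lemma Cmod_sub_le2 (a b : C) : Cmod a <= 1 -> Cmod b <= 1 -> Cmod (Cminus a b) <= 2.
Proof.
  intros Ha Hb; eapply Rle_trans; [apply Cmod_triangle|]; rewrite Cmod_opp; lra.
Qed.

Lemma Cmod_inv_1_sub_sub_Cexp_le (z : C) : Re z <= 0 ->
  Cmod (Cminus (Cinv (Cminus (RtoC 1) z)) (Cexp z))
  <= Rmin 2 (Cmod (Cminus (Cminus (RtoC 1) z) (Cexp (Copp z)))).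
Proof.
  intros Hz; set (u := Cminus (RtoC 1) z).
  pose proof (Cmod_1_sub_ge1 z Hz) as Hu; fold u in Hu.
  pose proof (Cmod_inv_le1 u Hu) as Hinv.
  pose proof (Cmod_Cexp_le1 z Hz) as Hexp.
  apply Rmin_glb; [now apply Cmod_sub_le2|].
  rewrite Cinv_sub_Cexp by (intros E; rewrite E, Cmod_0 in Hu; lra).
  rewrite !Cmod_mult, <- (Cmod_opp (Cminus (Cexp (Copp z)) u)).
  replace (Copp (Cminus (Cexp (Copp z)) u)) with (Cminus u (Cexp (Copp z)))
    by (unfold Cminus; ring).
  pose proof (Cmod_ge_0 (Cinv u)); pose proof (Cmod_ge_0 (Cexp z)).
  pose proof (Cmod_ge_0 (Cminus u (Cexp (Copp z)))).
  assert (Cmod (Cinv u) * Cmod (Cexp z) <= 1) by nra.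
  nra.
Qed.

Lemma Cmod_Cprod_le1 (M : nat) (a : nat -> C) :
  (forall m, (m < M)%nat -> Cmod (a m) <= 1) -> Cmod (Cprod M a) <= 1.
Proof.
  intros Ha; induction M as [|M IH]; simpl; [rewrite Cmod_1; lra|].
  rewrite Cmod_mult.
  assert (Cmod (Cprod M a) <= 1) by (apply IH; intros m Hm; apply Ha; lia).
  pose proof (Ha M (Nat.lt_succ_diag_r M)).
  pose proof (Cmod_ge_0 (Cprod M a)); pose proof (Cmod_ge_0 (a M)); nra.
Qed.

Lemma Cmod_Cprod_sub_le (M : nat) (a b : nat -> C) :
  (forall m, (m < M)%nat -> Cmod (a m) <= 1) ->
  (forall m, (m < M)%nat -> Cmod (b m) <= 1) ->
  Cmod (Cminus (Cprod M a) (Cprod M b)) <= Rsum M (fun m => Cmod (Cminus (a m) (b m))).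
Proof.
  intros Ha Hb; induction M as [|M IH]; simpl.
  - replace (Cminus (RtoC 1) (RtoC 1)) with (RtoC 0) by (unfold Cminus; ring).
    rewrite Cmod_0; lra.
  - replace (Cminus (Cmult (Cprod M a) (a M)) (Cmult (Cprod M b) (b M)))
      with (Cplus (Cmult (Cminus (Cprod M a) (Cprod M b)) (a M))
                  (Cmult (Cprod M b) (Cminus (a M) (b M))))
      by (unfold Cminus; ring).
    eapply Rle_trans; [apply Cmod_triangle|]; rewrite !Cmod_mult.
    assert (IH' : Cmod (Cminus (Cprod M a) (Cprod M b))
                  <= Rsum M (fun m => Cmod (Cminus (a m) (b m))))
      by (apply IH; intros m Hm; [apply Ha | apply Hb]; lia).
    assert (Cmod (Cprod M b) <= 1) by (apply Cmod_Cprod_le1; intros m Hm; apply Hb; lia).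
    pose proof (Ha M (Nat.lt_succ_diag_r M)).
    pose proof (Cmod_ge_0 (Cminus (Cprod M a) (Cprod M b))).
    pose proof (Cmod_ge_0 (Cprod M b)); pose proof (Cmod_ge_0 (a M)).
    pose proof (Cmod_ge_0 (Cminus (a M) (b M))).
    nra.
Qed.

Theorem lemma3 (N M : nat) (sigma2 beta : R) (h : nat -> Complex.C)
  (lam : nat -> R) (omega : nat -> R)
  (Hsigma : 0 < sigma2) (Hbeta : 0 < beta)
  (Hlam : forall m, (m < M)%nat -> 0 <= lam m) :
  let z := fun m => zm N sigma2 beta (lam m) h omega in
  Cmod (Cminus (Cprod M (fun m => Cinv (Cminus (RtoC 1) (z m))))
               (Cprod M (fun m => Cexp (z m))))
  <= Rsum M (fun m => Rmin 2 (Cmod (Cminus (Cminus (RtoC 1) (z m)) (Cexp (Copp (z m)))))).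
Proof.
  intros z.
  assert (Hz : forall m, (m < M)%nat -> Re (z m) <= 0)
    by (intros m Hm; apply Re_zm_le0; auto).
  eapply Rle_trans; [apply Cmod_Cprod_sub_le|].
  - intros m Hm; apply Cmod_inv_le1, Cmod_1_sub_ge1, Hz, Hm.
  - intros m Hm; apply Cmod_Cexp_le1, Hz, Hm.
  - apply Rsum_le; intros m Hm; apply Cmod_inv_1_sub_sub_Cexp_le, Hz, Hm.
Qed.
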